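(* The preordering associated with the box $[-1,1]^n$ is included in the quadratic module of the unit ball. In particular, for every $d\in\mathbb N$, $$\mathcal O_d(1\pm X_i: i\in\{1,\dots,n\})\subset\mathcal Q_{d+n}(1-\|\mathbf X\|_2^2).$$
   Context: $\Sigma^2$ is the cone of sums of squares in $\mathbb R[X_1,\dots,X_n]$, $\|\mathbf X\|_2^2=\sum X_i^2$. For polynomials $h_1,\dots,h_k$: $\mathcal Q(h_1,\dots,h_k)=\Sigma^2+\sum_j\Sigma^2h_j$, $\mathcal Q_d(h_1,\dots,h_k)=\{s_0+\sum_js_jh_j: s_j\in\Sigma^2,\deg s_0\le d,\deg(s_jh_j)\le d\}$; the preordering is $\mathcal O(h_1,\dots,h_k)=\mathcal Q(\prod_{j\in J}h_j: J\subset\{1,\dots,k\})$ and $\mathcal O_d(h_1,\dots,h_k)=\mathcal Q_d(\prod_{j\in J}h_j:J\subset\{1,\dots,k\})$. Here the $2n$ generators are $1+X_i$ and $1-X_i$, $i=1,\dots,n$. *)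

From HB Require Import structures.
From mathcomp Require Import all_boot all_order all_algebra.
From mathcomp Require Import reals.
From mathcomp Require Import mpoly.
Set Implicit Arguments. Unset Strict Implicit. Unset Printing Implicit Defensive.
Import Order.TTheory GRing.Theory Num.Theory.
Local Open Scope ring_scope.

Section Defs.
Variables (R : realType) (n : nat).

Definition sos (p : {mpoly R[n]}) : Prop :=
  exists s : seq {mpoly R[n]}, p = \sum_(q <- s) q ^+ 2.

(* Truncated quadratic module Q_d(h_j : j in I), for a finite family of
   generators h indexed by a finite type I.  "deg f <= d" is rendered as
   msize f <= d.+1 (msize = 1 + total degree, msize 0 = 0, so the zero
   polynomial has degree -oo and always qualifies). *)
Definition QM_d (I : finType) (h : I -> {mpoly R[n]}) (d : nat)
    (p : {mpoly R[n]}) : Prop :=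
  exists (s0 : {mpoly R[n]}) (s : I -> {mpoly R[n]}),
    [/\ sos s0, (forall j, sos (s j)),
        (msize s0 <= d.+1)%N,
        (forall j, msize (s j * h j) <= d.+1)%N &
        p = s0 + \sum_(j : I) s j * h j].

Definition QM (I : finType) (h : I -> {mpoly R[n]}) (p : {mpoly R[n]}) : Prop :=
  exists (s0 : {mpoly R[n]}) (s : I -> {mpoly R[n]}),
    [/\ sos s0, (forall j, sos (s j)) & p = s0 + \sum_(j : I) s j * h j].

Definition subset_prods (I : finType) (h : I -> {mpoly R[n]})
  : {set I} -> {mpoly R[n]} := fun J => \prod_(j in J) h j.

Definition PO (I : finType) (h : I -> {mpoly R[n]}) : {mpoly R[n]} -> Prop :=
  QM (subset_prods h).
Definition PO_d (I : finType) (h : I -> {mpoly R[n]}) (d : nat)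
  : {mpoly R[n]} -> Prop := QM_d (subset_prods h) d.

Definition box_gen (ib : 'I_n * bool) : {mpoly R[n]} :=
  if ib.2 then 1 + 'X_ib.1 else 1 - 'X_ib.1.

Definition ball_gen (_ : unit) : {mpoly R[n]} :=
  1 - \sum_(i < n) 'X_i ^+ 2.

End Defs.

From HB Require Import structures.
From mathcomp Require Import all_boot all_order all_algebra.
From mathcomp Require Import reals.
From mathcomp Require Import mpoly.
From mathcomp Require Import ring zify.
Set Implicit Arguments. Unset Strict Implicit. Unset Printing Implicit Defensive.
Import Order.TTheory GRing.Theory Num.Theory.
Local Open Scope ring_scope.

(** Write [g = 1 - ||X||^2].  On the ball,
      [1 +- X_i = 1/2 ((1 +- X_i)^2 + sum_(k != i) X_k^2) + 1/2 g]  and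
      [(1 + X_i) (1 - X_i) = sum_(k != i) X_k^2 + g],
    so the part of a product of box generators that involves the coordinate
    [X_i] lies in [Q_2(g)], a degree loss of at most one per coordinate.  For a
    single generator [Q_a(g) Q_b(g) <= Q_(a+b)(g)], because [g^2] is a square;
    hence a product of box generators of degree [e] lies in [Q_(e+n)(g)], and
    additivity of the degree turns [deg (s_J prod_J) <= d] into membership of
    [s_J prod_J] in [Q_(d+n)(g)]. *)

Section SumsOfSquares.
Variables (R : realType) (n : nat).
Implicit Types p q : {mpoly R[n]}.

Lemma sos0 : sos (0 : {mpoly R[n]}).
Proof. by exists [::]; rewrite big_nil. Qed.

Lemma sos_sqr p : sos (p ^+ 2).
Proof. by exists [:: p]; rewrite big_seq1. Qed.

Lemma sosC (c : R) : 0 <= c -> sos (c%:MP : {mpoly R[n]}).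
Proof. by move=> c_ge0; rewrite -[c]sqr_sqrtr // rmorphXn; apply: sos_sqr. Qed.

Lemma sos1 : sos (1 : {mpoly R[n]}).
Proof. by rewrite -(expr1n _ 2); apply: sos_sqr. Qed.

Lemma sosD p q : sos p -> sos q -> sos (p + q).
Proof. by move=> [s1 ->] [s2 ->]; exists (s1 ++ s2); rewrite big_cat. Qed.

Lemma sosM p q : sos p -> sos q -> sos (p * q).
Proof.
move=> [s1 ->] [s2 ->]; exists [seq x * y | x <- s1, y <- s2].
rewrite big_allpairs_dep mulr_suml; apply: eq_bigr => x _.
by rewrite mulr_sumr; apply: eq_bigr => y _; rewrite exprMn.
Qed.

Lemma sos_sum (I : Type) (r : seq I) (P : pred I) (F : I -> {mpoly R[n]}) :
  (forall i, P i -> sos (F i)) -> sos (\sum_(i <- r | P i) F i).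
Proof. by move=> sosF; apply: big_ind => //; [apply: sos0 | apply: sosD]. Qed.

End SumsOfSquares.

Section Truncation.
Variables (R : realType) (n : nat) (I : finType) (h : I -> {mpoly R[n]}).

Lemma QM_d_QM d p : QM_d h d p -> QM h p.
Proof. by move=> [s0 [s [sos_s0 sos_s _ _ ->]]]; exists s0, s. Qed.

Lemma QM_QM_d p : QM h p -> exists d, QM_d h d p.
Proof.
move=> [s0 [s [sos_s0 sos_s ->]]].
exists (maxn (msize s0) (\max_j msize (s j * h j))), s0, s; split => //.
- by rewrite leqW // leq_maxl.
- move=> j; rewrite leqW // (leq_trans _ (leq_maxr _ _)) //.
  exact: (leq_bigmax_cond (F := fun j => msize (s j * h j))).
Qed.

End Truncation.

Section Degree.
Variables (R : idomainType) (n : nat).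
Implicit Types p q : {mpoly R[n]}.

Lemma msizeM_le_pred p q : (msize (p * q) <= (msize p + msize q).-1)%N.
Proof.
have [->|p0] := eqVneq p 0; first by rewrite mul0r msize0.
have [->|q0] := eqVneq q 0; first by rewrite mulr0 msize0.
by rewrite msizeM.
Qed.

Lemma leq_msizeM p q a b : (msize p <= a.+1)%N -> (msize q <= b.+1)%N ->
  (msize (p * q) <= (a + b).+1)%N.
Proof. by move=> hp hq; apply: leq_trans (msizeM_le_pred p q) _; lia. Qed.

Lemma leq_msize_sum (I : Type) (r : seq I) (P : pred I) (F : I -> {mpoly R[n]}) b :
  (forall i, P i -> msize (F i) <= b)%N -> (msize (\sum_(i <- r | P i) F i) <= b)%N.
Proof.
move=> hF; apply: (big_ind (fun p => msize p <= b)%N) => //; first by rewrite msize0.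
by move=> p q hp hq; apply: leq_trans (msizeD_le _ _) _; rewrite geq_max hp.
Qed.

Lemma msize_gt0 p : (0 < msize p)%N = (p != 0).
Proof. by rewrite lt0n msize_poly_eq0. Qed.

Lemma msizeXU (i : 'I_n) : msize ('X_i : {mpoly R[n]}) = 2%N.
Proof. by rewrite msizeX mdeg1. Qed.

Lemma msizeXU_sqr (i : 'I_n) : (msize ('X_i ^+ 2 : {mpoly R[n]}) <= 3)%N.
Proof. by rewrite expr2 (@leq_msizeM _ _ 1 1) ?msizeXU. Qed.

Lemma msize_1D_linear (i : 'I_n) p : p@_U_(i)%MM != 0 -> msize p = 2%N ->
  msize (1 + p) = 2%N.
Proof.
move=> pi_neq0 msize_p; apply/eqP; rewrite eqn_leq.
rewrite (leq_trans (msizeD_le _ _)) ?geq_max ?msize1 ?msize_p //=.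
have U_neq0 : (U_(i)%MM == 0%MM) = false by apply/negbTE; rewrite -mdeg_eq0 mdeg1.
have : U_(i)%MM \in msupp (1 + p).
  by rewrite mcoeff_msupp mcoeffD mcoeff1 U_neq0 add0r.
by move/msize_mdeg_lt; rewrite mdeg1.
Qed.

End Degree.

Section SingleGeneratorModule.
Variables (R : realType) (n : nat) (g : {mpoly R[n]}).
Implicit Types p q : {mpoly R[n]}.

Definition QM1_d (d : nat) p : Prop :=
  exists s t, [/\ sos s, sos t, (msize s <= d.+1)%N, (msize (t * g) <= d.+1)%N &
                  p = s + t * g].

Lemma QM1_d_QM_d (h : unit -> {mpoly R[n]}) d p :
  h tt = g -> QM1_d d p -> QM_d h d p.
Proof.
move=> hg [s [t [sos_s sos_t msize_s msize_tg ->]]].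
exists s, (fun=> t); split => // [[]|]; first by rewrite hg.
by rewrite (big_pred1 tt) ?hg // => -[].
Qed.

Lemma QM1_d_mono d e p : (d <= e)%N -> QM1_d d p -> QM1_d e p.
Proof.
move=> le_de [s [t [? ? msize_s msize_tg ->]]].
by exists s, t; split; rewrite // (leq_trans _ (le_de : d.+1 <= e.+1)%N).
Qed.

Lemma sos_QM1_d p : sos p -> QM1_d (msize p).-1 p.
Proof.
move=> sos_p; exists p, 0; rewrite mul0r addr0 msize0 leqSpred.
by split=> //; apply: sos0.
Qed.

Lemma QM1_d0 d : QM1_d d 0.
Proof. by apply: QM1_d_mono _ (sos_QM1_d (sos0 R n)); rewrite msize0. Qed.

Lemma QM1_d1 : QM1_d 0 1.
Proof. by have := sos_QM1_d (sos1 R n); rewrite msize1. Qed.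

Lemma QM1_dD d p q : QM1_d d p -> QM1_d d q -> QM1_d d (p + q).
Proof.
move=> [s1 [t1 [? ? ms1 mt1 ->]]] [s2 [t2 [? ? ms2 mt2 ->]]].
exists (s1 + s2), (t1 + t2); split; rewrite ?mulrDl; try exact: sosD.
- by rewrite (leq_trans (msizeD_le _ _)) // geq_max ms1.
- by rewrite (leq_trans (msizeD_le _ _)) // geq_max mt1.
- by rewrite addrACA.
Qed.

Lemma QM1_d_sum (I : Type) (r : seq I) (P : pred I) (F : I -> {mpoly R[n]}) d :
  (forall i, P i -> QM1_d d (F i)) -> QM1_d d (\sum_(i <- r | P i) F i).
Proof. by move=> QF; apply: big_ind => //; [apply: QM1_d0 | apply: QM1_dD]. Qed.

(* [t1 t2 g^2] is a sum of squares, and of degree [deg (t1 g) + deg (t2 g)]. *)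
Lemma QM1_dM a b p q : QM1_d a p -> QM1_d b q -> QM1_d (a + b) (p * q).
Proof.
move=> [s1 [t1 [? ? ms1 mt1 ->]]] [s2 [t2 [? ? ms2 mt2 ->]]].
exists (s1 * s2 + t1 * t2 * g ^+ 2), (s1 * t2 + s2 * t1); split.
- by apply: sosD; [apply: sosM | apply: sosM; [apply: sosM | apply: sos_sqr]].
- by apply: sosD; apply: sosM.
- rewrite (leq_trans (msizeD_le _ _)) // geq_max leq_msizeM //=.
  by rewrite (_ : _ * g ^+ 2 = (t1 * g) * (t2 * g)) ?leq_msizeM //; ring.
- rewrite mulrDl (leq_trans (msizeD_le _ _)) // geq_max -!mulrA leq_msizeM //=.
  by rewrite addnC leq_msizeM.
- ring.
Qed.

Lemma QM1_d_prod (I : Type) (r : seq I) (F : I -> {mpoly R[n]}) :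
  (forall i, F i != 0) -> (forall i, exists2 d, QM1_d d (F i) & (d <= msize (F i))%N) ->
  exists2 d, QM1_d d (\prod_(i <- r) F i) &
    (d <= (msize (\prod_(i <- r) F i)).-1 + size r)%N.
Proof.
move=> F_neq0 QF; elim: r => [|i r [d Qr le_d]].
  by exists 0%N; rewrite big_nil //; apply: QM1_d1.
have [e Qi le_e] := QF i.
have prod_neq0 : \prod_(j <- r) F j != 0.
  by rewrite prodf_seq_neq0 (eq_all (a2 := predT)) ?all_predT // => j; rewrite F_neq0.
exists (e + d)%N; rewrite big_cons; first exact: QM1_dM.
rewrite msizeM //=; move: le_d le_e (F_neq0 i) prod_neq0; rewrite -!msize_gt0.
by move: (msize (F i)) (msize (\prod_(j <- r) F j)) => a b; lia.
Qed.

End SingleGeneratorModule.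

Section BoxInBall.
Variables (R : realType) (n : nat).
Local Notation ball := (ball_gen R n tt).
Local Notation box_gen := (@box_gen R n).

Definition sqnorm_off (i : 'I_n) : {mpoly R[n]} := \sum_(k < n | k != i) 'X_k ^+ 2.

Lemma sos_sqnorm_off i : sos (sqnorm_off i).
Proof. by apply: sos_sum => k _; apply: sos_sqr. Qed.

Lemma msize_sqnorm_off i : (msize (sqnorm_off i) <= 3)%N.
Proof. by apply: leq_msize_sum => k _; apply: msizeXU_sqr. Qed.

Lemma ball_genE i : ball = 1 - 'X_i ^+ 2 - sqnorm_off i.
Proof. by rewrite /ball_gen (bigD1 i) //= opprD addrA. Qed.

Lemma msize_ball : (msize ball <= 3)%N.
Proof.
rewrite (leq_trans (msizeD_le _ _)) // geq_max msize1 msizeN /=.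
by apply: leq_msize_sum => k _; apply: msizeXU_sqr.
Qed.

(* [1 + Y = 1/2 ((1 + Y)^2 + sum_(k != i) X_k^2) + 1/2 g] as soon as [Y^2 = X_i^2]. *)
Lemma QM1_d_1D_linear i (Y : {mpoly R[n]}) : Y ^+ 2 = 'X_i ^+ 2 -> (msize Y <= 2)%N ->
  QM1_d ball 2 (1 + Y).
Proof.
move=> YX msize_Y; pose c : {mpoly R[n]} := (2^-1)%:MP.
have c2 : c * 2 = 1.
  by rewrite /c -mpolyC_nat -rmorphM mulVf ?pnatr_eq0 // rmorph1.
have msize_c : (msize c <= 1)%N by rewrite msizeC leq_b1.
have msize_1DY : (msize (1 + Y) <= 2)%N.
  by rewrite (leq_trans (msizeD_le _ _)) // geq_max msize1.
exists (c * ((1 + Y) ^+ 2 + sqnorm_off i)), c; split.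
- apply: sosM; first by apply: sosC; rewrite invr_ge0 ler0n.
  by apply: sosD; [apply: sos_sqr | apply: sos_sqnorm_off].
- by apply: sosC; rewrite invr_ge0 ler0n.
- rewrite (@leq_msizeM _ _ _ _ 0 2) // (leq_trans (msizeD_le _ _)) //.
  by rewrite geq_max msize_sqnorm_off expr2 (@leq_msizeM _ _ _ _ 1 1).
- by rewrite (@leq_msizeM _ _ _ _ 0 2) ?msize_ball.
- rewrite (ball_genE i) -YX; transitivity (c * 2 * (1 + Y)); first by rewrite c2 mul1r.
  ring.
Qed.

Lemma msize_box_gen ib : msize (box_gen ib) = 2%N.
Proof.
by case: ib => i [|]; apply: (@msize_1D_linear _ _ i);
  rewrite /= ?mcoeffN ?msizeN ?msizeXU // mcoeffXU eqxx ?oppr_eq0 /= oner_neq0.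
Qed.

Lemma box_gen_neq0 ib : box_gen ib != 0.
Proof. by rewrite -msize_gt0 msize_box_gen. Qed.

Lemma box_gen_QM1_d ib : QM1_d ball 2 (box_gen ib).
Proof.
have msize_Xi : (msize ('X_ib.1 : {mpoly R[n]}) <= 2)%N by rewrite msizeXU.
case: ib msize_Xi => i [|] /= msize_Xi; apply: (@QM1_d_1D_linear i) => //.
- by rewrite sqrrN.
- by rewrite msizeN.
Qed.

Lemma box_gen_pair_QM1_d i : QM1_d ball 2 (box_gen (i, true) * box_gen (i, false)).
Proof.
exists (sqnorm_off i), 1; split.
- exact: sos_sqnorm_off.
- exact: sos1.
- exact: msize_sqnorm_off.
- by rewrite mul1r msize_ball.
- by rewrite /box_gen /= (ball_genE i); ring.
Qed.

Definition box_factor (J : {set 'I_n * bool}) (i : 'I_n) : {mpoly R[n]} :=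
  \prod_(b | (i, b) \in J) box_gen (i, b).

Lemma box_factor_neq0 J i : box_factor J i != 0.
Proof. by apply/prodf_neq0 => b _; apply: box_gen_neq0. Qed.

Lemma box_factor_QM1_d J i :
  exists2 d, QM1_d ball d (box_factor J i) & (d <= msize (box_factor J i))%N.
Proof.
rewrite /box_factor big_mkcond big_bool /=.
case: ifP => _; case: ifP => _; rewrite ?mulr1 ?mul1r.
- exists 2%N; first exact: box_gen_pair_QM1_d.
  by rewrite msizeM ?box_gen_neq0 // !msize_box_gen.
1,2: by exists 2%N; rewrite ?msize_box_gen //; apply: box_gen_QM1_d.
- by exists 0%N => //; apply: QM1_d1.
Qed.

Lemma subset_prods_box J : subset_prods box_gen J = \prod_(i < n) box_factor J i.
Proof. by rewrite /subset_prods pair_big_dep; apply: eq_bigl => -[i b]. Qed.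

Lemma subset_prods_box_neq0 J : subset_prods box_gen J != 0.
Proof. by rewrite subset_prods_box; apply/prodf_neq0 => i _; apply: box_factor_neq0. Qed.

Lemma subset_prods_box_QM1_d J : exists2 d, QM1_d ball d (subset_prods box_gen J) &
  (d <= (msize (subset_prods box_gen J)).-1 + n)%N.
Proof.
have size_n : size (index_enum 'I_n) = n by rewrite /index_enum -enumT size_enum_ord.
have [d Qd le_d] := QM1_d_prod (index_enum 'I_n) (box_factor_neq0 J) (box_factor_QM1_d J).
by rewrite size_n in le_d; exists d; rewrite subset_prods_box.
Qed.

Lemma PO_d_box_QM_d_ball d p : PO_d box_gen d p -> QM_d (@ball_gen R n) (d + n) p.
Proof.
move=> [s0 [s [sos_s0 sos_s msize_s0 msize_s ->]]]; apply: QM1_d_QM_d => //.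
apply: QM1_dD.
  by apply: QM1_d_mono (sos_QM1_d ball sos_s0); move: msize_s0; lia.
apply: QM1_d_sum => J _; have [->|sJ_neq0] := eqVneq (s J) 0.
  by rewrite mul0r; apply: QM1_d0.
have [e Qe le_e] := subset_prods_box_QM1_d J.
apply: QM1_d_mono (QM1_dM (sos_QM1_d ball (sos_s J)) Qe).
move: (msize_s J) le_e; rewrite msizeM ?subset_prods_box_neq0 //.
move: sJ_neq0 (subset_prods_box_neq0 J); rewrite -!msize_gt0.
by move: (msize (s J)) (msize (subset_prods box_gen J)) => a b; lia.
Qed.

End BoxInBall.

Theorem mainTheorem13 (R : realType) (n : nat) :
  (forall p : {mpoly R[n]}, PO (@box_gen R n) p -> QM (@ball_gen R n) p) /\
  (forall (d : nat) (p : {mpoly R[n]}),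
     PO_d (@box_gen R n) d p -> QM_d (@ball_gen R n) (d + n) p).
Proof.
split; last exact: PO_d_box_QM_d_ball.
by move=> p /QM_QM_d [d /PO_d_box_QM_d_ball /QM_d_QM].
Qed.
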